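(* Let $n\in\mathbb{N}$, $\omega=\omega_n=\frac{n^2}{4}$, and $c>0$ such that $\frac{n^2+c^2}{2c}\notin\mathbb{Z}'$, where $\mathbb{Z}'$ is the set of even integers if $n$ is even and of odd integers if $n$ is odd. Consider the linear system of uncoupled ODEs $$\psi_m''(y)+i(m-c)\psi_m'(y)+\left(\omega-\frac{m^2}{4}\right)\psi_m(y)=0,\qquad m\in\mathbb{Z}',$$ whose solutions are spanned by $\psi_{m'}(y)=e^{\kappa y}\delta_{m,m'}$, where $\kappa$ is a root of $\kappa^2+i(m-c)\kappa+\omega-\frac{m^2}{4}=0$, i.e. $$\kappa=\kappa_m^{\pm}=\frac{i(c-m)\pm\sqrt{2cm-n^2-c^2}}{2},\qquad m\in\mathbb{Z}'.$$ Let $m_0$ be the largest element of $\mathbb{Z}'$ not exceeding $\frac{n^2+c^2}{2c}$, and let $E_m^{\pm}$ denote the eigenspace associated with the $m$-th Fourier component corresponding to the root $\kappa_m^{\pm}$. Then: (i) the phase space of this linear system decomposes into the direct sum $E^s\oplus E^u\oplus E^{c^+}\oplus E^{c^-}$, where $E^s=\oplus_{m>m_0}E_m^+$, $E^u=\oplus_{m>m_0}E_m^-$, $E^{c^+}=\oplus_{m\le m_0}E_m^+$, $E^{c^-}=\oplus_{m\le m_0}E_m^-$ (with $m\in\mathbb{Z}'$); (ii) considering all roots $\kappa_m^\pm$, $m\in\mathbb{Z}'$, together, the zero root $\kappa=0$ is semi-simple of multiplicity two, the purely imaginary roots $\kappa\in i\mathbb{R}$ are semi-simple of multiplicity at most three,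 and all other roots $\kappa\in\mathbb{C}$ are simple.
   Context: This linear system is the linearization at zero, with $\epsilon=0$, of the Fourier-mode system obtained from traveling solutions $\psi(x,y)=\sqrt{\epsilon}\sum_{m\in\mathbb{Z}'}\psi_m(y)e^{imx/2}$, $y=x-ct$, of a Gross--Pitaevskii equation. *)

From HB Require Import structures.
From mathcomp Require Import all_boot all_order all_algebra.
From mathcomp Require Import reals.
From mathcomp Require Export complex.
Set Implicit Arguments. Unset Strict Implicit. Unset Printing Implicit Defensive.
Import Order.TTheory GRing.Theory Num.Theory.
Local Open Scope ring_scope.
Local Open Scope complex_scope.

Section GP.
Variables (R : realType) (n : nat) (c : R).
Local Notation C := (R[i]).

Definition inZ' (m : int) : bool := odd `|m|%N == odd n.

Definition omega : R := (n%:R) ^+ 2 / 4.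

Definition discr (m : int) : R := 2 * c * m%:~R - (n%:R) ^+ 2 - c ^+ 2.

Definition sqrt_discr (m : int) : C :=
  if 0 <= discr m then (Num.sqrt (discr m))%:C
  else 'i * (Num.sqrt (- discr m))%:C.

Definition kappa_p (m : int) : C := ('i * (c - m%:~R)%:C + sqrt_discr m) / 2.
Definition kappa_m (m : int) : C := ('i * (c - m%:~R)%:C - sqrt_discr m) / 2.

(* First-order reduction of the m-th ODE
     psi'' + i(m-c) psi' + (omega - m^2/4) psi = 0
   on the phase space C^2 of row vectors x = (psi, psi'), written as
   x' = x *m Amx m (row-vector convention of mathcomp's eigenspace). *)
Definition Amx (m : int) : 'M[C]_2 :=
  \matrix_(i < 2, j < 2)
    if i == 0 :> nat then
      (if j == 0 :> nat then 0 else - (omega - m%:~R ^+ 2 / 4)%:C)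
    else
      (if j == 0 :> nat then 1 else - ('i * (m%:~R - c)%:C)).

Definition Ep (m : int) : 'M[C]_2 := eigenspace (Amx m) (kappa_p m).
Definition Em (m : int) : 'M[C]_2 := eigenspace (Amx m) (kappa_m m).

(* total algebraic multiplicity of kappa, over all Fourier modes m in Z',
   is at most k: every finite family of distinct modes contributes <= k *)
Definition total_mult_le (kappa : C) (k : nat) : Prop :=
  forall s : seq int, uniq s ->
    (\sum_(m <- s | inZ' m) mup kappa (char_poly (Amx m)) <= k)%N.

Definition total_mult_eq (kappa : C) (k : nat) : Prop :=
  total_mult_le kappa k /\
  exists s : seq int, uniq s /\
    (\sum_(m <- s | inZ' m) mup kappa (char_poly (Amx m)))%N = k.

(* semi-simplicity of kappa for the block-diagonal linear system:
   geometric multiplicity = algebraic multiplicity in every block *)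
Definition semisimple (kappa : C) : Prop :=
  forall m, inZ' m ->
    \rank (eigenspace (Amx m) kappa) = mup kappa (char_poly (Amx m)).

End GP.

From HB Require Import structures.
From mathcomp Require Import all_boot all_order all_algebra.
From mathcomp Require Import reals complex.
From mathcomp Require Import ring lra zify.
Set Implicit Arguments. Unset Strict Implicit. Unset Printing Implicit Defensive.
Import Order.TTheory GRing.Theory Num.Theory.
Local Open Scope ring_scope.
Local Open Scope complex_scope.

(* Each Fourier mode m is a 2x2 companion system whose characteristic
   polynomial factors as (X - kappa_m^+)(X - kappa_m^-), with
   kappa_m^+ - kappa_m^- a square root of 2cm - n^2 - c^2.  Non-resonance makes
   this discriminant nonzero, so both roots are simple in every mode and the two
   eigenlines span the mode's phase space.  The sign of the discriminant, i.e. of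
   m - (n^2 + c^2)/(2c), decides whether the roots are real opposite numbers or
   purely imaginary.  A root a + it occurs in mode m iff a(2t + m - c) = 0 and
   a^2 - t(t + m - c) + (n^2 - m^2)/4 = 0: for a <> 0 this fixes m = c - 2t, for
   a = 0 it is a quadratic equation in m, so a purely imaginary root occurs in at
   most two modes (sharper than the bound three), and 0 occurs at m = n and -n. *)

Lemma mup_XsubC_mul_XsubC (F : fieldType) (a b k : F) : a != b ->
  mup k (('X - a%:P) * ('X - b%:P)) = root (('X - a%:P) * ('X - b%:P)) k.
Proof.
move=> neq_ab; rewrite rootM !root_XsubC mupM ?polyXsubC_eq0 //.
rewrite -['X - a%:P]expr1 -['X - b%:P]expr1 !mup_XsubCX.
have [<-|neq_ak] := eqVneq a k; first by rewrite eq_sym (negbTE neq_ab).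
by rewrite add0n eq_sym; case: eqP.
Qed.

Lemma count_int_roots_le (R : numDomainType) (q : {poly R}) (P : pred int)
    (s : seq int) :
  uniq s -> q != 0 -> (forall m, P m -> root q m%:~R) ->
  (count P s <= (size q).-1)%N.
Proof.
move=> uniq_s q_neq0 rootP; rewrite -size_filter -ltnS.
apply: leq_trans (leqSpred _); rewrite -(size_map (fun m : int => m%:~R : R)).
apply: max_poly_roots q_neq0 _ _.
  by apply/allP => y /mapP[m]; rewrite mem_filter => /andP[/rootP ? _] ->.
by rewrite map_inj_uniq ?filter_uniq //; apply: intr_inj.
Qed.

Section TwoByTwo.
Variables (F : fieldType) (A : 'M[F]_2).

Lemma mxdirect_eigenspace2 (a b : F) : a != b ->
  mxdirect (eigenspace A a + eigenspace A b)%MS.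
Proof.
move=> neq_ab; apply/mxdirect_addsP/eqP/rowV0P => v.
rewrite sub_capmx => /andP[/eigenspaceP va /eigenspaceP vb].
have : (a - b) *: v = 0 by rewrite scalerBl -va -vb subrr.
by move/eqP; rewrite scaler_eq0 subr_eq0 (negbTE neq_ab) => /eqP.
Qed.

Hypothesis A10_neq0 : A 1 0 != 0.

Lemma mxrank_eigenspace2 (a : F) : \rank (eigenspace A a) = eigenvalue A a.
Proof.
have rank_pos : (0 < \rank (A - a%:M)%R)%N.
  rewrite lt0n mxrank_eq0; apply: contra A10_neq0 => /eqP/matrixP/(_ 1 0).
  by rewrite !mxE /= mulr0n subr0 => ->.
have rank_le1 : (\rank (eigenspace A a) <= 1)%N.
  by rewrite mxrank_ker; move: rank_pos; case: (\rank _) => [|[|[|]]].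
rewrite /eigenvalue; case: eqP => [->|/eqP nz]; first by rewrite mxrank0.
by apply/eqP; rewrite eqn_leq rank_le1 lt0n mxrank_eq0.
Qed.

Lemma eigenspace2_sum_full (a b : F) : a != b ->
  eigenvalue A a -> eigenvalue A b ->
  (eigenspace A a + eigenspace A b :=: 1%:M)%MS.
Proof.
move=> neq_ab eig_a eig_b; apply/eqmxP; rewrite submx1 sub1mx /row_full.
have /mxdirect_addsP cap0 := mxdirect_eigenspace2 neq_ab.
by rewrite mxrank_disjoint_sum // !mxrank_eigenspace2 eig_a eig_b.
Qed.

End TwoByTwo.

Lemma ReC (R : rcfType) (z : R[i]) : 'Re z = (complex.Re z)%:C.
Proof. by rewrite ReJ_add Num.Theory.ReE. Qed.

Section Modes.
Variables (R : realType) (n : nat) (c : R).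
Local Notation A := (Amx n c).
Local Notation kp := (kappa_p n c).
Local Notation km := (kappa_m n c).
Local Notation d := (discr n c).
Local Notation threshold := ((n%:R ^+ 2 + c ^+ 2) / (2 * c)).

Lemma char_poly_Amx (m : int) :
  char_poly (A m) =
    'X * ('X + ('i * (m%:~R - c)%:C)%:P) + ((omega R n - m%:~R ^+ 2 / 4)%:C)%:P.
Proof.
rewrite /char_poly (expand_det_row _ ord0) !big_ord_recl big_ord0 /cofactor.
rewrite !det_mx11 /char_poly_mx !mxE /=.
by rewrite !polyCN /= expr0 expr1 mulr1n mulr0n !mul1r; ring.
Qed.

Lemma sqrt_discr_sqr (m : int) : sqrt_discr n c m ^+ 2 = (d m)%:C.
Proof.
rewrite /sqrt_discr; case: ifP => [d_ge0|d_lt0].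
  by rewrite -rmorphXn /= sqr_sqrtr.
rewrite exprMn sqr_i -rmorphXn /= sqr_sqrtr ?oppr_ge0 ?ltW ?ltNge ?d_lt0 //.
by rewrite mulN1r -rmorphN /= opprK.
Qed.

Lemma kappa_pB (m : int) : kp m - km m = sqrt_discr n c m.
Proof. by rewrite /kappa_p /kappa_m; field. Qed.

Lemma char_poly_Amx_factor (m : int) :
  char_poly (A m) = ('X - (kp m)%:P) * ('X - (km m)%:P).
Proof.
have kpD : kp m + km m = - ('i * (m%:~R - c)%:C).
  by rewrite /kappa_p /kappa_m; field.
have kpM : kp m * km m = (omega R n - m%:~R ^+ 2 / 4)%:C.
  have diff_sqr (a b : R[i]) : (a + b) / 2 * ((a - b) / 2) = (a ^+ 2 - b ^+ 2) / 4.
    by field.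
  rewrite /kappa_p /kappa_m diff_sqr.
  by rewrite sqrt_discr_sqr exprMn sqr_i /discr /omega; field.
have -> (a b : R[i]) :
    ('X - a%:P) * ('X - b%:P) = 'X * ('X - (a + b)%:P) + (a * b)%:P.
  by rewrite polyCD polyCM; ring.
by rewrite kpD kpM char_poly_Amx polyCN opprK.
Qed.

Lemma Amx10_neq0 (m : int) : A m 1 0 != 0.
Proof. by rewrite mxE /= oner_eq0. Qed.

Lemma eigenvalue_Amx (m : int) (k : R[i]) :
  eigenvalue (A m) k = (k == kp m) || (k == km m).
Proof. by rewrite eigenvalue_root_char char_poly_Amx_factor rootM !root_XsubC. Qed.

Lemma root_char_poly_Amx (m : int) (a t : R) :
  root (char_poly (A m)) (a +i* t) ->
  a * (2 * t + m%:~R - c) = 0 /\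
  a * a - t * (t + (m%:~R - c)) + (n%:R ^+ 2 / 4 - m%:~R ^+ 2 / 4) = 0.
Proof.
rewrite char_poly_Amx /root !hornerE /omega => /eqP root_eq.
have /= Re_eq := congr1 (@complex.Re R) root_eq.
have /= Im_eq := congr1 (@complex.Im R) root_eq.
by split; [rewrite -Im_eq | rewrite -Re_eq]; ring.
Qed.

Hypothesis c_gt0 : 0 < c.

Lemma discr_gt0 (m : int) : (0 < d m) = (threshold < m%:~R).
Proof. by rewrite ltr_pdivrMr ?mulr_gt0 // /discr; apply/idP/idP; lra. Qed.

Lemma discr_lt0 (m : int) : (d m < 0) = (m%:~R < threshold).
Proof. by rewrite ltr_pdivlMr ?mulr_gt0 // /discr; apply/idP/idP; lra. Qed.

Lemma kappa_p_neq_m (m : int) : m%:~R != threshold -> kp m != km m.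
Proof.
move=> m_neq; have d_neq0 : d m != 0 by rewrite neq_lt discr_lt0 discr_gt0 -neq_lt.
rewrite -subr_eq0 kappa_pB; apply: contra d_neq0 => /eqP sd0.
by apply/eqP/(@complexI R); rewrite -sqrt_discr_sqr sd0 expr0n.
Qed.

Lemma mup_char_poly_Amx (m : int) (k : R[i]) : m%:~R != threshold ->
  mup k (char_poly (A m)) = eigenvalue (A m) k.
Proof.
move=> m_neq; rewrite eigenvalue_root_char char_poly_Amx_factor.
by rewrite mup_XsubC_mul_XsubC // kappa_p_neq_m.
Qed.

Lemma Re_kappa (m : int) :
  'Re (kp m) = (complex.Re (sqrt_discr n c m) / 2)%:C /\
  'Re (km m) = (- (complex.Re (sqrt_discr n c m) / 2))%:C.
Proof.
have half (z : R[i]) : complex.Re (z / 2) = complex.Re z / 2.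
  have -> : (2 : R[i])^-1 = (2^-1 : R)%:C by rewrite fmorphV /= rmorph_nat.
  by case: z => a b /=; rewrite mulr0 subr0.
have Re_iRD (x : R) (s : R[i]) : complex.Re ('i * x%:C + s) = complex.Re s.
  by case: s => a b /=; rewrite mul0r mulr0 subr0 add0r.
have ReN (s : R[i]) : complex.Re (- s) = - complex.Re s by case: s.
by rewrite !ReC /kappa_p /kappa_m !half !Re_iRD ReN mulNr.
Qed.

Lemma Re_kappa_hyperbolic (m : int) :
  threshold < m%:~R -> 'Re (kp m) * 'Re (km m) < 0.
Proof.
rewrite -discr_gt0 => d_gt0; have [-> ->] := Re_kappa m.
rewrite /sqrt_discr ltW //= -rmorphM ltcR.
have := sqrtr_gt0 (d m); rewrite d_gt0; nra.
Qed.

Lemma Re_kappa_center (m : int) :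
  m%:~R < threshold -> 'Re (kp m) = 0 /\ 'Re (km m) = 0.
Proof.
rewrite -discr_lt0 => d_lt0; have [-> ->] := Re_kappa m.
by rewrite /sqrt_discr leNgt d_lt0 /= mul0r mulr0 subr0 mul0r oppr0.
Qed.

Hypothesis nonresonant : forall m : int, inZ' n m -> m%:~R != threshold.

Lemma semisimple_Amx (k : R[i]) : semisimple n c k.
Proof.
move=> m zm; rewrite mxrank_eigenspace2 ?Amx10_neq0 //.
by rewrite mup_char_poly_Amx ?nonresonant.
Qed.

Lemma total_mult_le_roots (k : R[i]) (q : {poly R}) : q != 0 ->
  (forall m : int, inZ' n m -> eigenvalue (A m) k -> root q m%:~R) ->
  total_mult_le n c k (size q).-1.
Proof.
move=> q_neq0 rootq s uniq_s.
have -> : (\sum_(m <- s | inZ' n m) mup k (char_poly (A m)))%N =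
          count (fun m => inZ' n m && eigenvalue (A m) k) s.
  rewrite -sum1_count big_mkcondr /=; apply: eq_bigr => m zm.
  by rewrite mup_char_poly_Amx ?nonresonant //; case: eigenvalue.
by apply: count_int_roots_le => // m /andP[]; apply: rootq.
Qed.

Lemma total_mult_imag (t : R) : total_mult_le n c (0 +i* t) 2.
Proof.
pose q : {poly R} :=
  ('X - (- 4 * t)%:P) * 'X + (4 * t ^+ 2 - 4 * c * t - n%:R ^+ 2)%:P.
have size_q : size q = 3%N by rewrite size_MXaddC polyXsubC_eq0 size_XsubC.
have -> : 2%N = (size q).-1 by rewrite size_q.
apply: total_mult_le_roots.
  by rewrite -size_poly_eq0 size_q.
move=> m _; rewrite eigenvalue_root_char => /root_char_poly_Amx[_ eq_m].
rewrite /root hornerD hornerMX hornerXsubC hornerC -(mulr0 (-4 : R)) -{}eq_m.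
by apply/eqP; field.
Qed.

Lemma total_mult_nonimag (a t : R) : a != 0 -> total_mult_le n c (a +i* t) 1.
Proof.
move=> a_neq0; have -> : 1%N = (size ('X - (c - 2 * t)%:P)).-1 by rewrite size_XsubC.
apply: total_mult_le_roots; first by rewrite polyXsubC_eq0.
move=> m _; rewrite eigenvalue_root_char => /root_char_poly_Amx[eq_m _].
move: eq_m => /eqP; rewrite mulf_eq0 (negbTE a_neq0) /= root_XsubC => /eqP.
by move=> eq_m; apply/eqP; lra.
Qed.

Lemma total_mult_zero : (0 < n)%N -> total_mult_eq n c 0 2.
Proof.
move=> n_gt0; split; first exact: (total_mult_imag 0).
have root0 (m : int) : m ^+ 2 = n%:Z ^+ 2 -> eigenvalue (A m) 0.
  move=> m_sqr; rewrite eigenvalue_root_char char_poly_Amx /root !hornerE /omega.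
  have -> : (m%:~R : R) ^+ 2 = n%:R ^+ 2 by rewrite -rmorphXn m_sqr rmorphXn.
  by rewrite subrr.
have zn : inZ' n n%:Z by rewrite /inZ' absz_nat.
have zNn : inZ' n (- n%:Z) by rewrite /inZ' abszN absz_nat.
exists [:: n%:Z; - n%:Z]; split.
  by rewrite /= andbT inE; apply/negP => /eqP; lia.
rewrite !big_cons big_nil zn zNn !mup_char_poly_Amx ?nonresonant //.
by rewrite !root0 // sqrrN.
Qed.

End Modes.

Unset Implicit Arguments.
Set Strict Implicit.
Set Printing Implicit Defensive.

Theorem lemma1 (R : realType) (n : nat) (c : R) (m0 : int) :
  (0 < n)%N -> 0 < c ->
  (forall m : int, inZ' n m -> m%:~R != ((n%:R) ^+ 2 + c ^+ 2) / (2 * c)) ->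
  inZ' n m0 -> m0%:~R <= ((n%:R) ^+ 2 + c ^+ 2) / (2 * c) ->
  (forall m : int, inZ' n m -> m%:~R <= ((n%:R) ^+ 2 + c ^+ 2) / (2 * c) -> m <= m0) ->
  (forall m : int, inZ' n m ->
     [/\ eigenvalue (Amx n c m) (kappa_p n c m),
         eigenvalue (Amx n c m) (kappa_m n c m),
         mxdirect (Ep n c m + Em n c m)%MS,
         (Ep n c m + Em n c m :=: 1%:M)%MS &
         (if m0 < m then Re (kappa_p n c m) * Re (kappa_m n c m) < 0
          else (Re (kappa_p n c m) == 0) && (Re (kappa_m n c m) == 0))]) /\
  [/\ semisimple n c 0 /\ total_mult_eq n c 0 2,
      (forall kappa : R[i], Re kappa = 0 ->
         semisimple n c kappa /\ total_mult_le n c kappa 3) &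
      (forall kappa : R[i], Re kappa != 0 -> total_mult_le n c kappa 1)].
Proof.
move=> n_gt0 c_gt0 nonres zm0 m0_le m0_max; split.
  move=> m zm; have kp_neq_km := kappa_p_neq_m c_gt0 (nonres m zm).
  have eig_p : eigenvalue (Amx n c m) (kappa_p n c m) by rewrite eigenvalue_Amx eqxx.
  have eig_m : eigenvalue (Amx n c m) (kappa_m n c m).
    by rewrite eigenvalue_Amx eqxx orbT.
  split=> //; first exact: mxdirect_eigenspace2.
    exact/(eigenspace2_sum_full (Amx10_neq0 n c m) kp_neq_km eig_p eig_m).
  have [m0_lt_m | m_le_m0] := ltP m0 m.
    have m_gt : ((n%:R) ^+ 2 + c ^+ 2) / (2 * c) < m%:~R.
      by rewrite ltNge; apply/negP => /(m0_max _ zm); rewrite leNgt m0_lt_m.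
    exact: Re_kappa_hyperbolic m_gt.
  have m_lt : m%:~R < ((n%:R) ^+ 2 + c ^+ 2) / (2 * c).
    by rewrite lt_neqAle nonres //= (le_trans _ m0_le) ?ler_int.
  by have [-> ->] := Re_kappa_center c_gt0 m_lt; rewrite eqxx.
split.
- by split; [exact: semisimple_Amx | exact: total_mult_zero].
- case=> a t; rewrite ReC => /(@complexI R) /= ->; split; first exact: semisimple_Amx.
  by move=> s uniq_s; apply: leq_trans (total_mult_imag c_gt0 nonres t uniq_s) _.
- case=> a t; rewrite ReC => Re_neq0; apply: total_mult_nonimag => //.
  by apply: contra Re_neq0 => /eqP ->.
Qed.
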